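(* For each $m\ge0$ and $k\ge1$ there exists $R$ such that for all $S,T\ge R$, $$X_{S,T}X_{S,T}\equiv^m_k X_{S,T}\,\mathbf{a}\,X_{S,T},$$ where $X_{S,T}=(v^S\mathbf{a}v^S\mathbf{b}v^S)^T$.
   Context: Fix $r,s\ge1$ and the alphabet $B=\{a_1,\dots,a_r,b_1,\dots,b_s,c_1,\dots,c_{2r+2s}\}$. Let $v=c_1a_1c_2\,c_3a_2c_4\cdots c_{2r-1}a_rc_{2r}\,c_{2r+1}b_1c_{2r+2}\cdots c_{2r+2s-1}b_sc_{2r+2s}$, $\mathbf{a}=a_1\cdots a_r$, $\mathbf{b}=b_1\cdots b_s$. For $R>0$, an $R$-word is a word obtained by concatenating factors from $\{\mathbf{a},\mathbf{b},v^R\}$ such that the first and last factors are $v^R$ and among any two consecutive factors at least one is $v^R$ (this factorization is unique). For $R>2m$, the $m$-neighborhoods of an $R$-word are: each factor $v^m\mathbf{a}v^m$ or $v^m\mathbf{b}v^m$ surrounding one of the factors $\mathbf{a}$ or $\mathbf{b}$ of the factorization, together with the prefix $v^m$ and the suffix $v^m$ of the word. Marked $R$-words $(w_1,i_1),(w_2,i_2)$ are $\equiv^m_0$-equivalent if $w_1(i_1)=w_2(i_2)$ and either $i_1,i_2$ lie at the same position within identical $m$-neighborhoods, or neither lies in any $m$-neighborhood. The basic game on marked words: in each round Player 1 picks one word and moves its pebble to a different position; Player 2 must move the pebble in the other word in the same direction, onto the same letter, such that the set of letters strictly jumped over is the same in both words. The $m$-enhanced game additionally requires that after every round the current marked words are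 $\equiv^m_0$-equivalent. For unmarked $R$-words $w_1,w_2$, $w_1\equiv^m_k w_2$ means Player 2 has a winning strategy in the $k$-round $m$-enhanced game in which, in the first round, Player 1 places a pebble on a position of either word and Player 2 responds in the other so that the resulting marked words are $\equiv^m_0$-equivalent, after which $k-1$ further rounds of the $m$-enhanced game are played; Player 2 wins if she responds legally in every round. *)

From HB Require Import structures.
From mathcomp Require Import all_boot.
Set Implicit Arguments. Unset Strict Implicit. Unset Printing Implicit Defensive.

(* Letters of the alphabet B: a_i, b_j, c_l (1-based indices as in the paper).
   Only the indices a_1..a_r, b_1..b_s, c_1..c_{2r+2s} are ever used. *)
Definition letter := (nat + nat + nat)%type.
Definition la (i : nat) : letter := inl (inl i).
Definition lb (j : nat) : letter := inl (inr j).
Definition lc (l : nat) : letter := inr l.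
Definition word := seq letter.

Section Words.
Variables r s : nat.

Definition vw : word :=
  flatten [seq [:: lc (2*i - 1); la i; lc (2*i)] | i <- iota 1 r] ++
  flatten [seq [:: lc (2*r + 2*j - 1); lb j; lc (2*r + 2*j)] | j <- iota 1 s].
Definition aw : word := [seq la i | i <- iota 1 r].
Definition bw : word := [seq lb j | j <- iota 1 s].
Definition vpow (n : nat) : word := flatten (nseq n vw).

Inductive factor := Fa | Fb | Fv of nat.
Definition fword (f : factor) : word :=
  match f with Fa => aw | Fb => bw | Fv n => vpow n end.
Definition word_of (fs : seq factor) : word := flatten (map fword fs).

Definition is_vfac (f : factor) := if f is Fv _ then true else false.
Definition is_Rword (R : nat) (fs : seq factor) : Prop :=
  [/\ (forall i, i < size fs -> if nth Fa fs i is Fv n then R <= n else True) /\ (forall i, i.+1 < size fs ->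
        is_vfac (nth Fa fs i) || is_vfac (nth Fa fs i.+1)),
      is_vfac (head Fa fs) & is_vfac (last Fa fs)].

Inductive nkind := NPre | NSuf | NA | NB.
Definition nkind_code (k : nkind) : nat :=
  match k with NPre => 0 | NSuf => 1 | NA => 2 | NB => 3 end.
Definition nkind_decode (n : nat) : nkind :=
  match n with 0 => NPre | 1 => NSuf | 2 => NA | _ => NB end.
Lemma nkind_codeK : cancel nkind_code nkind_decode. Proof. by case. Qed.
HB.instance Definition _ := Equality.copy nkind (can_type nkind_codeK).

(* neighborhoods around the a/b factors: (kind, start position, length) *)
Fixpoint nbhds_aux (m pos : nat) (fs : seq factor) : seq (nkind * nat * nat) :=
  match fs with
  | [::] => [::]
  | f :: fs' =>
    let rest := nbhds_aux m (pos + size (fword f)) fs' in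
    match f with
    | Fa => (NA, pos - m * size vw, m * size vw + size aw + m * size vw) :: rest
    | Fb => (NB, pos - m * size vw, m * size vw + size bw + m * size vw) :: rest
    | Fv _ => rest
    end
  end.

Definition nbhds (m : nat) (fs : seq factor) : seq (nkind * nat * nat) :=
  (NPre, 0, m * size vw)
  :: (NSuf, size (word_of fs) - m * size vw, m * size vw)
  :: nbhds_aux m 0 fs.

Definition locate (m : nat) (fs : seq factor) (p : nat) : option (nkind * nat) :=
  match [seq x <- nbhds m fs | (x.1.2 <= p) && (p < x.1.2 + x.2)] with
  | x :: _ => Some (x.1.1, p - x.1.2)
  | [::] => None
  end.

Definition equiv0 (m : nat) (fs1 : seq factor) (p1 : nat) (fs2 : seq factor) (p2 : nat) : Prop :=
  onth (word_of fs1) p1 = onth (word_of fs2) p2 /\ locate m fs1 p1 = locate m fs2 p2.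

Definition jumped (w : word) (p p' : nat) : word :=
  drop (minn p p').+1 (take (maxn p p') w).

(* Player 2's answer q -> q' in w' to Player 1's move p -> p' in w is legal
   for the basic game *)
Definition basic_ok (w : word) (p p' : nat) (w' : word) (q q' : nat) : Prop :=
  [/\ q' < size w', (p' < p) = (q' < q), (p < p') = (q < q'),
      onth w p' = onth w' q' & jumped w p p' =i jumped w' q q'].

(* Player 2 wins the remaining k rounds of the m-enhanced game from
   the marked words (word_of fs1, p1), (word_of fs2, p2). *)
Fixpoint wins (m k : nat) (fs1 : seq factor) (p1 : nat) (fs2 : seq factor) (p2 : nat) : Prop :=
  match k with
  | 0 => True
  | k'.+1 =>
    (forall p1', p1' < size (word_of fs1) -> p1' != p1 ->
       exists p2', [/\ basic_ok (word_of fs1) p1 p1' (word_of fs2) p2 p2',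
                       equiv0 m fs1 p1' fs2 p2' & wins m k' fs1 p1' fs2 p2'])
    /\
    (forall p2', p2' < size (word_of fs2) -> p2' != p2 ->
       exists p1', [/\ basic_ok (word_of fs2) p2 p2' (word_of fs1) p1 p1',
                       equiv0 m fs1 p1' fs2 p2' & wins m k' fs1 p1' fs2 p2'])
  end.

(* unmarked words: w1 ≡^m_k w2 (for k >= 1) *)
Definition equivk (m k : nat) (fs1 fs2 : seq factor) : Prop :=
  (forall p1, p1 < size (word_of fs1) ->
     exists p2, [/\ p2 < size (word_of fs2), equiv0 m fs1 p1 fs2 p2 &
                    wins m k.-1 fs1 p1 fs2 p2])
  /\
  (forall p2, p2 < size (word_of fs2) ->
     exists p1, [/\ p1 < size (word_of fs1), equiv0 m fs1 p1 fs2 p2 &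
                    wins m k.-1 fs1 p1 fs2 p2]).

Definition Xf (S T : nat) : seq factor :=
  flatten (nseq T [:: Fv S; Fa; Fv S; Fb; Fv S]).

End Words.

From mathcomp Require Import all_boot zify.
Set Implicit Arguments. Unset Strict Implicit. Unset Printing Implicit Defensive.

(* Player 2 keeps her pebble at an offset from Player 1's: no offset near the
   beginning of the words, an offset of r = |a| near their end.  Away from the
   ends both words are periodic with period N = |v^S a v^S b v^S|, and the extra
   a of X a X sits inside a factor v^S a v^S that also occurs in X X; since
   S > 3m, the letter and the m-neighbourhood label at a position only depend on
   a window of radius m|v| around it.  Hence every position far from the ends has
   a look-alike, with the same surroundings, in every stretch of length 5N of the
   other word.  A short move (at most 3|v| letters) is copied verbatim; a longer
   one jumps over a whole copy of v, hence over every letter that occurs at all,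
   and is answered by a look-alike on the same side.  With j rounds left, the
   pebbles have identical surroundings of radius j(3|v|+1) and are aligned with
   an end of the words whenever one of them is close to it. *)

Definition agree_around T (A B : nat -> T) (rho p q : nat) : Prop :=
  forall x y, x + q = y + p -> p <= x + rho -> x <= p + rho -> A x = B y.

Section AgreeAround.
Variables (T : Type) (A B C : nat -> T).

Lemma agree_around_sym rho p q : agree_around A B rho p q -> agree_around B A rho q p.
Proof. by move=> H x y E H1 H2; symmetry; apply: H; lia. Qed.

Lemma agree_around_trans rho p q o : rho <= q ->
  agree_around A B rho p q -> agree_around B C rho q o -> agree_around A C rho p o.
Proof.
move=> Hq H1 H2 x z E Ha Hb.
have -> : A x = B (x + q - p) by apply: H1; lia.
by apply: H2; lia.
Qed.

Lemma agree_around_shiftr rho e e' p q : e <= e' ->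
  agree_around A B (rho + e') p q -> agree_around A B rho (p + e) (q + e).
Proof. by move=> He H x y E H1 H2; apply: H; lia. Qed.

Lemma agree_around_shiftl rho e e' p q : e <= e' -> e <= p -> e <= q ->
  agree_around A B (rho + e') p q -> agree_around A B rho (p - e) (q - e).
Proof. by move=> He Hp Hq H x y E H1 H2; apply: H; lia. Qed.

Lemma agree_around_period rho a t N :
  (forall x, a - rho <= x -> x + N <= a + t * N + rho -> A x = A (x + N)) ->
  agree_around A A rho a (a + t * N).
Proof.
elim: t => [|t IH] Hper x y E H1 H2; first by have -> : y = x by lia.
rewrite mulSn in E Hper.
have -> : y = (x + t * N) + N by lia.
rewrite -(Hper (x + t * N)); try lia.
by apply: IH; [move=> z Hz1 Hz2; apply: Hper | | |]; lia.
Qed.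
End AgreeAround.

Lemma jumpedC w x y : jumped w x y = jumped w y x.
Proof. by rewrite /jumped minnC maxnC. Qed.

Lemma jumped_mkseq (w : word) x y : x < y -> y <= size w ->
  jumped w x y = mkseq (fun t => nth (la 0) w (x.+1 + t)) (y - x.+1).
Proof.
move=> Hxy Hy; rewrite /jumped (minn_idPl (ltnW Hxy)) (maxn_idPr (ltnW Hxy)).
apply: (@eq_from_nth _ (la 0)); first by rewrite size_mkseq size_drop size_takel.
move=> i; rewrite size_drop size_takel // => Hi.
by rewrite nth_mkseq // nth_drop nth_take //; lia.
Qed.

Lemma jumped_translate (w w' : word) x y x' y' : x < y -> y <= size w ->
  x' < y' -> y' <= size w' -> y - x = y' - x' ->
  (forall t, t < y - x.+1 -> nth (la 0) w (x.+1 + t) = nth (la 0) w' (x'.+1 + t)) ->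
  jumped w x y = jumped w' x' y'.
Proof.
move=> Hxy Hy Hxy' Hy' E Ht; rewrite !jumped_mkseq //.
have -> : y' - x'.+1 = y - x.+1 by lia.
by apply/eq_in_map => t; rewrite mem_iota => /andP[_ /Ht].
Qed.

Section Annotation.
Variables r s m : nat.
Local Notation W := (word_of r s).

Definition annot (fs : seq factor) (x : nat) : option (letter * option (nkind * nat)) :=
  if x < size (W fs) then Some (nth (la 0) (W fs) x, locate r s m fs x) else None.

Lemma annot_out fs x : size (W fs) <= x -> annot fs x = None.
Proof. by rewrite /annot leqNgt => /negbTE ->. Qed.

Lemma annot_eqP fs1 fs2 x y : annot fs1 x = annot fs2 y -> x < size (W fs1) ->
  [/\ y < size (W fs2), nth (la 0) (W fs1) x = nth (la 0) (W fs2) y &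
      locate r s m fs1 x = locate r s m fs2 y].
Proof. by rewrite /annot => + Hx; rewrite Hx; case: ifP => // Hy [-> ->]. Qed.

Lemma annot_size fs1 fs2 x y : annot fs1 x = annot fs2 y -> x < size (W fs1) ->
  y < size (W fs2).
Proof. by move=> E /(annot_eqP E) []. Qed.

Lemma annot_equiv0 fs1 fs2 x y : annot fs1 x = annot fs2 y -> x < size (W fs1) ->
  equiv0 r s m fs1 x fs2 y.
Proof.
move=> E Hx; have [Hy En El] := annot_eqP E Hx.
by split=> //; rewrite !onthE !(nth_map (la 0)) // En.
Qed.
End Annotation.

Section Strategy.
Variables (r s m d K P P0 k : nat) (Sig : word).
Local Notation W := (word_of r s).
Local Notation A := (annot r s m).

Definition radius j := j * d.
Definition margin j := j.+1 * K.

Lemma radiusS j : radius j.+1 = radius j + d. Proof. by rewrite /radius mulSn addnC. Qed.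
Lemma marginS j : margin j.+1 = margin j + K. Proof. by rewrite /margin mulSn addnC. Qed.
Lemma leq_radius i j : i <= j -> radius i <= radius j.
Proof. by move=> H; rewrite leq_mul2r H orbT. Qed.
Lemma leq_margin i j : i <= j -> margin i <= margin j.
Proof. by move=> H; rewrite leq_mul2r ltnS H orbT. Qed.

Definition jumps_cover (w : word) :=
  forall x y, x + d <= y -> y < size w -> jumped w x y =i Sig.

Definition recurrent j fs1 fs2 :=
  forall p, margin j <= p -> p + margin j <= size (W fs1) ->
  forall x, margin j <= x -> x + P + margin j <= size (W fs2) ->
  exists2 q, x <= q < x + P & agree_around (A fs1) (A fs2) (radius j) p q.

Record strategy_hyps fs1 fs2 : Prop := StrategyHyps {
  step_gt0 : 0 < d;
  window_le : d + P <= K;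
  size_left : 2 * margin k + P <= size (W fs1);
  size_right : 2 * margin k + P <= size (W fs2);
  prefix_len : margin k + radius k <= P0;
  prefix_agree : forall x, x < P0 -> A fs1 x = A fs2 x;
  suffix_agree : forall x y, x + size (W fs2) = y + size (W fs1) ->
    size (W fs1) <= x + P0 -> A fs1 x = A fs2 y;
  cover_left : jumps_cover (W fs1);
  cover_right : jumps_cover (W fs2);
  recur_left : forall j, j <= k -> recurrent j fs1 fs2;
  recur_right : forall j, j <= k -> recurrent j fs2 fs1 }.

Lemma strategy_hyps_sym fs1 fs2 : strategy_hyps fs1 fs2 -> strategy_hyps fs2 fs1.
Proof.
case=> ? ? ? ? ? Hpre Hsuf *; split=> // [x Hx | x y E Hx].
  by rewrite Hpre.
by symmetry; apply: Hsuf; lia.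
Qed.

Lemma jumped_cover w x y : jumps_cover w -> x < size w -> y < size w ->
  x + d <= y \/ y + d <= x -> jumped w x y =i Sig.
Proof. by move=> Hw Hx Hy [H|H]; [|rewrite jumpedC]; apply: Hw. Qed.

Definition pebble_inv j fs1 fs2 p q :=
  [/\ p < size (W fs1), q < size (W fs2),
      agree_around (A fs1) (A fs2) (radius j) p q,
      p < margin j \/ q < margin j -> p = q &
      size (W fs1) - p < margin j \/ size (W fs2) - q < margin j ->
        size (W fs1) - p = size (W fs2) - q].

Lemma pebble_inv_sym j fs1 fs2 p q : pebble_inv j fs1 fs2 p q -> pebble_inv j fs2 fs1 q p.
Proof.
case=> H1 H2 H3 H4 H5; split=> //; first exact: agree_around_sym.
- by move=> H; symmetry; apply: H4; case: H; auto.
- by move=> H; symmetry; apply: H5; case: H; auto.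
Qed.

Section Round.
Variables (fs1 fs2 : seq factor) (j p q : nat).
Hypotheses (hyps : strategy_hyps fs1 fs2) (j_lt_k : j < k)
           (inv : pebble_inv j.+1 fs1 fs2 p q).
Local Notation n1 := (size (W fs1)).
Local Notation n2 := (size (W fs2)).

Definition answers p' q' :=
  [/\ basic_ok (W fs1) p p' (W fs2) q q', A fs1 p' = A fs2 q' & pebble_inv j fs1 fs2 p' q'].

Lemma round_bounds :
  [/\ 0 < d, d + P <= K, 2 * margin j.+1 + P <= n1, 2 * margin j.+1 + P <= n2 &
      margin j.+1 + radius j.+1 <= P0].
Proof.
case: hyps => Hd HK Hn1 Hn2 HP0 *.
have Hm := leq_margin j_lt_k; have Hr := leq_radius j_lt_k.
by split=> //; lia.
Qed.

Lemma answer_far p' q' : p' < n1 -> agree_around (A fs1) (A fs2) (radius j) p' q' ->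
  (p' < p) = (q' < q) -> (p < p') = (q < q') ->
  p + d <= p' \/ p' + d <= p -> q + d <= q' \/ q' + d <= q ->
  (p' < margin j \/ q' < margin j -> p' = q') ->
  (n1 - p' < margin j \/ n2 - q' < margin j -> n1 - p' = n2 - q') ->
  answers p' q'.
Proof.
move=> Hp' Hagree Hlt Hgt Hfar1 Hfar2 Hstart Hend.
have [Hp Hq _ _ _] := inv.
have E : A fs1 p' = A fs2 q' by apply: Hagree; lia.
have Hq' := annot_size E Hp'.
split=> //; split=> //; first by case: (annot_equiv0 E Hp').
by move=> z; rewrite (jumped_cover (cover_left hyps) Hp Hp' Hfar1)
                    (jumped_cover (cover_right hyps) Hq Hq' Hfar2).
Qed.

Lemma answer_near_start p' : p' < n1 -> p' + d < margin j.+1 ->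
  p + d <= p' \/ p' + d <= p -> answers p' p'.
Proof.
move=> Hp' Hnear Hfar.
have [_ _ _ Hstart _] := inv.
have [Hd HK Hn1 Hn2 HP0] := round_bounds; have HM := marginS j; have HR := radiusS j.
have same : p = q \/ margin j.+1 <= p /\ margin j.+1 <= q.
  case: (ltnP p (margin j.+1)) => H1; first by left; apply: Hstart; left.
  case: (ltnP q (margin j.+1)) => H2; first by left; apply: Hstart; right.
  by right.
apply: answer_far; try (apply/idP/idP; lia); try lia.
move=> x y E H1 H2; have -> : y = x by lia.
by apply: (prefix_agree hyps); lia.
Qed.

Lemma answer_near_end p' : p' < n1 -> n1 + d < p' + margin j.+1 ->
  p + d <= p' \/ p' + d <= p -> answers p' (n2 - (n1 - p')).
Proof.
move=> Hp' Hnear Hfar.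
have [Hp Hq _ _ Hend] := inv.
have [Hd HK Hn1 Hn2 HP0] := round_bounds; have HM := marginS j; have HR := radiusS j.
have same : n1 - p = n2 - q \/ margin j.+1 <= n1 - p /\ margin j.+1 <= n2 - q.
  case: (ltnP (n1 - p) (margin j.+1)) => H1; first by left; apply: Hend; left.
  case: (ltnP (n2 - q) (margin j.+1)) => H2; first by left; apply: Hend; right.
  by right.
apply: answer_far; try (apply/idP/idP; lia); try lia.
by move=> x y E H1 H2; apply: (suffix_agree hyps); lia.
Qed.

Lemma answer_short_right e : 0 < e < d -> p + e < n1 -> answers (p + e) (q + e).
Proof.
move=> /andP[e_gt0 e_lt] Hp'.
have [Hp Hq Hagree Hstart Hend] := inv.
have [Hd HK Hn1 Hn2 HP0] := round_bounds; have HM := marginS j; have HR := radiusS j.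
have E : A fs1 (p + e) = A fs2 (q + e) by apply: Hagree; lia.
have Hq' := annot_size E Hp'.
split=> //; last first.
  split=> //; try (move=> H; have := Hstart; have := Hend; lia).
  by apply: (agree_around_shiftr (e' := d)); [lia | by rewrite -HR].
split=> //; try (apply/idP/idP; lia); first by case: (annot_equiv0 E Hp').
move=> z; congr (z \in _); apply: jumped_translate; try lia.
move=> t Ht; have E' : A fs1 (p.+1 + t) = A fs2 (q.+1 + t) by apply: Hagree; lia.
by case: (annot_eqP E' _) => //; lia.
Qed.

Lemma answer_short_left e : 0 < e < d -> e <= p -> answers (p - e) (q - e).
Proof.
move=> /andP[e_gt0 e_lt] Hep.
have [Hp Hq Hagree Hstart Hend] := inv.
have [Hd HK Hn1 Hn2 HP0] := round_bounds; have HM := marginS j; have HR := radiusS j.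
have Heq : e <= q by have := Hstart; lia.
have Hp' : p - e < n1 by lia.
have E : A fs1 (p - e) = A fs2 (q - e) by apply: Hagree; lia.
have Hq' := annot_size E Hp'.
split=> //; last first.
  split=> //; try (move=> H; have := Hstart; have := Hend; lia).
  by apply: (agree_around_shiftl (e' := d)); [lia | lia | lia | by rewrite -HR].
split=> //; try (apply/idP/idP; lia); first by case: (annot_equiv0 E Hp').
move=> z; rewrite !(jumpedC _ _ (_ - e)); congr (z \in _); apply: jumped_translate; try lia.
move=> t Ht; have E' : A fs1 ((p - e).+1 + t) = A fs2 ((q - e).+1 + t) by apply: Hagree; lia.
by case: (annot_eqP E' _) => //; lia.
Qed.

Lemma answer_long_right p' : p' < n1 -> p + d <= p' -> margin j.+1 <= p' + d ->
  p' + margin j.+1 <= n1 + d -> exists q', answers p' q'.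
Proof.
move=> Hp' Hfar Hstart' Hend'.
have [Hp Hq _ _ Hend] := inv.
have [Hd HK Hn1 Hn2 HP0] := round_bounds; have HM := marginS j.
have Hroom : q + margin j.+1 <= n2.
  by case: (ltnP (n2 - q) (margin j.+1)) => H; [have := Hend (or_intror H) | ]; lia.
have [q' Hq' Hagree] := recur_left hyps (ltnW j_lt_k) (p := p') ltac:(lia) ltac:(lia)
  (x := maxn (q + d) (margin j)) ltac:(lia) ltac:(lia).
by exists q'; apply: answer_far => //; try (apply/idP/idP; lia); lia.
Qed.

Lemma answer_long_left p' : p' + d <= p -> margin j.+1 <= p' + d ->
  p' + margin j.+1 <= n1 + d -> exists q', answers p' q'.
Proof.
move=> Hfar Hstart' Hend'.
have [Hp Hq _ Hstart _] := inv.
have [Hd HK Hn1 Hn2 HP0] := round_bounds; have HM := marginS j.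
have Hroom : margin j.+1 <= q.
  by case: (ltnP q (margin j.+1)) => H; [have := Hstart (or_intror H) | ]; lia.
have [q' Hq' Hagree] := recur_left hyps (ltnW j_lt_k) (p := p') ltac:(lia) ltac:(lia)
  (x := minn (q - d - P) (n2 - margin j - P)) ltac:(lia) ltac:(lia).
by exists q'; apply: answer_far => //; try (apply/idP/idP; lia); lia.
Qed.

(* Short moves are copied; long moves are mirrored near an end and answered
   by a look-alike position in the middle. *)
Lemma round_answer p' : p' < n1 -> p' != p -> exists q', answers p' q'.
Proof.
move=> Hp' Hne.
have [Hd HK Hn1 Hn2 HP0] := round_bounds.
have [lt_pp' | lt_p'p] : p < p' \/ p' < p by lia.
- case: (ltnP p' (p + d)) => Hfar.
    exists (q + (p' - p)); rewrite -[X in answers X _](subnKC (ltnW lt_pp')).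
    by apply: answer_short_right; lia.
  case: (ltnP (p' + d) (margin j.+1)) => Hstart; first by exists p'; apply: answer_near_start; lia.
  case: (ltnP (n1 + d) (p' + margin j.+1)) => Hend.
    by exists (n2 - (n1 - p')); apply: answer_near_end; lia.
  exact: answer_long_right.
- case: (ltnP p (p' + d)) => Hfar.
    exists (q - (p - p')); rewrite -[X in answers X _](subKn (ltnW lt_p'p)).
    by apply: answer_short_left; lia.
  case: (ltnP (p' + d) (margin j.+1)) => Hstart; first by exists p'; apply: answer_near_start; lia.
  case: (ltnP (n1 + d) (p' + margin j.+1)) => Hend.
    by exists (n2 - (n1 - p')); apply: answer_near_end; lia.
  exact: answer_long_left.
Qed.
End Round.

Lemma wins_of_pebble_inv fs1 fs2 : strategy_hyps fs1 fs2 ->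
  forall j, j <= k -> forall p q, pebble_inv j fs1 fs2 p q -> wins r s m j fs1 p fs2 q.
Proof.
move=> hyps; elim=> [//|j IH] Hj p q inv /=; split.
- move=> p' Hp' Hne; have [q' [Hb E inv']] := round_answer hyps Hj inv Hp' Hne.
  by exists q'; split=> //; [exact: annot_equiv0 E Hp' | exact: IH (ltnW Hj) _ _ inv'].
- move=> q' Hq' Hne.
  have [p' [Hb E inv']] := round_answer (strategy_hyps_sym hyps) Hj (pebble_inv_sym inv) Hq' Hne.
  exists p'; split=> //; last exact: IH (ltnW Hj) _ _ (pebble_inv_sym inv').
  exact: annot_equiv0 (esym E) (annot_size E Hq').
Qed.

Lemma opening_answer fs1 fs2 p : strategy_hyps fs1 fs2 -> p < size (W fs1) ->
  exists q, A fs1 p = A fs2 q /\ pebble_inv k fs1 fs2 p q.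
Proof.
case=> Hd HK Hn1 Hn2 HP0 Hpre Hsuf _ _ Hrec _ Hp.
suff [q [Hagree Hstart Hend]] : exists q, [/\ agree_around (A fs1) (A fs2) (radius k) p q,
    p < margin k \/ q < margin k -> p = q &
    size (W fs1) - p < margin k \/ size (W fs2) - q < margin k ->
      size (W fs1) - p = size (W fs2) - q].
  have E : A fs1 p = A fs2 q by apply: Hagree; lia.
  by exists q; split=> //; split=> //; exact: annot_size E Hp.
case: (ltnP p (margin k)) => H1.
  exists p; split=> [x y E Ha Hb | | ]; try lia.
  have -> : y = x by lia.
  by apply: Hpre; lia.
case: (ltnP (size (W fs1)) (p + margin k)) => H2.
  exists (size (W fs2) - (size (W fs1) - p)); split; try lia.
  by move=> x y E Ha Hb; apply: Hsuf; lia.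
have [q Hq Hagree] := Hrec k (leqnn k) p H1 ltac:(lia) (margin k) (leqnn _) ltac:(lia).
by exists q; split=> //; lia.
Qed.

Lemma equivk_of_strategy_hyps fs1 fs2 :
  strategy_hyps fs1 fs2 -> equivk r s m k.+1 fs1 fs2.
Proof.
move=> hyps; split=> [p1 Hp1 | p2 Hp2].
- have [q [E inv]] := opening_answer hyps Hp1.
  exists q; split; [exact: annot_size E Hp1 | exact: annot_equiv0 E Hp1 |].
  exact: wins_of_pebble_inv inv.
- have [q [E inv]] := opening_answer (strategy_hyps_sym hyps) Hp2.
  have Hq := annot_size E Hp2.
  exists q; split=> //; first exact: annot_equiv0 (esym E) Hq.
  exact: wins_of_pebble_inv (pebble_inv_sym inv).
Qed.
End Strategy.

Section Neighborhoods.
Variables r s m : nat.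
Local Notation V := (size (vw r s)).
Local Notation W := (word_of r s).
Local Notation aux := (nbhds_aux r s m).

Definition covers (p : nat) (e : nkind * nat * nat) := (e.1.2 <= p) && (p < e.1.2 + e.2).

Definition locate_in (l : seq (nkind * nat * nat)) (p : nat) : option (nkind * nat) :=
  if [seq e <- l | covers p e] is e :: _ then Some (e.1.1, p - e.1.2) else None.

Lemma locateE fs p : locate r s m fs p = locate_in (nbhds r s m fs) p.
Proof. by []. Qed.

Lemma locate_in_catl l1 l2 p : (forall e, e \in l1 -> ~~ covers p e) ->
  locate_in (l1 ++ l2) p = locate_in l2 p.
Proof.
move=> H; rewrite /locate_in filter_cat (@eq_in_filter _ _ pred0 l1) ?filter_pred0 //.
by move=> e /H /negbTE.
Qed.

Lemma locate_in_catr l1 l2 p : (forall e, e \in l2 -> ~~ covers p e) ->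
  locate_in (l1 ++ l2) p = locate_in l1 p.
Proof.
move=> H; rewrite /locate_in filter_cat (@eq_in_filter _ _ pred0 l2) ?filter_pred0 ?cats0 //.
by move=> e /H /negbTE.
Qed.

Definition shift_nbhd c (e : nkind * nat * nat) := (e.1.1, e.1.2 + c, e.2).

Lemma locate_in_shift l c p : locate_in (map (shift_nbhd c) l) (p + c) = locate_in l p.
Proof.
rewrite /locate_in filter_map (@eq_filter _ _ (covers p)); last first.
  by move=> e; rewrite /= /covers /= leq_add2r; congr (_ && _); lia.
by case: [seq x <- l | _] => //= e _; congr (Some (_, _)); lia.
Qed.

Lemma word_of_cat fs1 fs2 : W (fs1 ++ fs2) = W fs1 ++ W fs2.
Proof. by rewrite /word_of map_cat flatten_cat. Qed.

Lemma size_word_of_cat fs1 fs2 : size (W (fs1 ++ fs2)) = size (W fs1) + size (W fs2).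
Proof. by rewrite word_of_cat size_cat. Qed.

Lemma size_word_of_cons f fs : size (W (f :: fs)) = size (fword r s f) + size (W fs).
Proof. exact: size_cat. Qed.

Lemma size_vpow n : size (vpow r s n) = n * V.
Proof. by elim: n => //= n IH; rewrite /vpow /= size_cat -/(vpow r s n) IH mulSn. Qed.

Lemma nbhds_aux_cat pos fs1 fs2 :
  aux pos (fs1 ++ fs2) = aux pos fs1 ++ aux (pos + size (W fs1)) fs2.
Proof.
elim: fs1 pos => [|f fs1 IH] pos /=; first by rewrite addn0.
by rewrite IH size_word_of_cons; case: f => [||n] /=; rewrite addnA.
Qed.

Lemma nbhds_aux_bound pos fs e : e \in aux pos fs ->
  pos - m * V <= e.1.2 /\ e.1.2 + e.2 <= pos + size (W fs) + 2 * (m * V).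
Proof.
case: e => [[k0 st] ln] /=.
elim: fs pos => [|f fs IH] pos //=; rewrite size_word_of_cons.
case: f => [||n] /=; try rewrite inE => /orP [/eqP [_ -> ->]|]; try (split; lia);
  by move=> /IH [H1 H2]; split; lia.
Qed.

Lemma nbhds_aux_end L e : e \in aux 0 L -> e.1.2 + e.2 <= size (W L) + 2 * (m * V).
Proof. by case: e => [[k0 st] ln] /nbhds_aux_bound /= [_ Hb]; lia. Qed.

Lemma nbhds_aux_shift pos c fs : m * V <= pos -> aux (pos + c) fs = map (shift_nbhd c) (aux pos fs).
Proof.
elim: fs pos => [|f fs IH] pos Hp //=.
rewrite (addnAC pos c) IH; last by lia.
by case: f => [||n] //=; rewrite /shift_nbhd /=; congr ((_, _, _) :: _); lia.
Qed.

Lemma locate_prefix fs x : x < m * V -> locate r s m fs x = Some (NPre, x).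
Proof. by move=> H; rewrite /locate /nbhds /= H subn0. Qed.

Lemma locate_suffix fs x : m * V <= x -> size (W fs) - m * V <= x -> x < size (W fs) ->
  locate r s m fs x = Some (NSuf, x - (size (W fs) - m * V)).
Proof.
move=> H1 H2 H3; rewrite /locate /nbhds /= add0n ltnNge H1 /= H2 /=.
by have -> : x < size (W fs) - m * V + m * V by lia.
Qed.

Lemma locate_mid L M R x :
  m * V <= x -> x + m * V < size (W (L ++ M ++ R)) -> x + m * V < size (W L) + size (W M) ->
  (forall e, e \in aux 0 L -> e.1.2 + e.2 <= x) ->
  locate r s m (L ++ M ++ R) x = locate_in (aux (size (W L)) M) x.
Proof.
move=> H1 H2 H3 HL; rewrite locateE /nbhds.
rewrite -cat1s locate_in_catl; last by move=> e; rewrite inE => /eqP -> /=; rewrite -leqNgt.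
rewrite -cat1s locate_in_catl; last first.
  by move=> e; rewrite inE => /eqP ->; rewrite /covers /=; apply/negP; lia.
rewrite !nbhds_aux_cat add0n locate_in_catl; last first.
  by move=> e /HL He; apply/negP => /andP[_]; rewrite ltnNge He.
rewrite locate_in_catr // => -[[k0 st] ln] /nbhds_aux_bound /= [Ha Hb].
by rewrite /covers /=; apply/negP; lia.
Qed.

Lemma locate_in_vpow pos n fs o : m <= n ->
  locate_in (aux pos (Fv n :: fs)) (pos + o) = locate_in (aux (n * V) fs) o.
Proof.
move=> Hn /=; rewrite size_vpow addnC nbhds_aux_shift; last by rewrite leq_mul2r Hn orbT.
by rewrite addnC locate_in_shift.
Qed.

Lemma nth_word_of_mid L M R o : o < size (W M) ->
  nth (la 0) (W (L ++ M ++ R)) (size (W L) + o) = nth (la 0) (W M) o.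
Proof. by move=> Ho; rewrite !word_of_cat nth_cat ltnNge leq_addr /= addKn nth_cat Ho. Qed.

(* The annotation of a position inside a factor [M] starting with [v^n], [m <= n],
   at distance at least [m |v|] from both ends of [M], only depends on [M]. *)
Lemma annot_mid L M R L' R' n M0 o :
  M = Fv n :: M0 -> m <= n ->
  m * V <= size (W L) + o -> m * V <= size (W L') + o ->
  size (W L) + o + m * V < size (W (L ++ M ++ R)) ->
  size (W L') + o + m * V < size (W (L' ++ M ++ R')) ->
  o + m * V < size (W M) ->
  (forall e, e \in aux 0 L -> e.1.2 + e.2 <= size (W L) + o) ->
  (forall e, e \in aux 0 L' -> e.1.2 + e.2 <= size (W L') + o) ->
  annot r s m (L ++ M ++ R) (size (W L) + o) = annot r s m (L' ++ M ++ R') (size (W L') + o).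
Proof.
move=> -> Hn H1 H1' H2 H2' H3 HL HL'; rewrite /annot.
rewrite (_ : _ < size (W (L ++ _ ++ R))); last by lia.
rewrite (_ : _ < size (W (L' ++ _ ++ R'))); last by lia.
by rewrite !nth_word_of_mid ?locate_mid ?locate_in_vpow //; lia.
Qed.
End Neighborhoods.

Definition Xblock (S : nat) : seq factor := [:: Fv S; Fa; Fv S; Fb; Fv S].

Lemma XfS S T : Xf S T.+1 = Xblock S ++ Xf S T. Proof. by []. Qed.

Lemma Xf_add S T1 T2 : Xf S (T1 + T2) = Xf S T1 ++ Xf S T2.
Proof. by rewrite /Xf nseqD flatten_cat. Qed.

Lemma size_vw_gt0 r s : 0 < r -> 0 < size (vw r s).
Proof. by case: r. Qed.

Section Sizes.
Variables r s S T : nat.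
Local Notation W := (word_of r s).
Local Notation N := (size (W (Xblock S))).
Local Notation XX := (Xf S T ++ Xf S T).
Local Notation XaX := (Xf S T ++ Fa :: Xf S T).

Lemma size_aw : size (aw r) = r. Proof. by rewrite size_map size_iota. Qed.
Lemma size_bw : size (bw s) = s. Proof. by rewrite size_map size_iota. Qed.

Lemma size_Xblock : N = 3 * (S * size (vw r s)) + r + s.
Proof. by rewrite !size_word_of_cons /= !size_vpow size_aw size_bw; lia. Qed.

Lemma size_Xf n : size (W (Xf S n)) = n * N.
Proof. by elim: n => // n IH; rewrite XfS size_word_of_cat IH mulSn. Qed.

Lemma size_XX : size (W XX) = 2 * (T * N).
Proof. by rewrite size_word_of_cat size_Xf; lia. Qed.

Lemma size_XaX : size (W XaX) = 2 * (T * N) + r.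
Proof. by rewrite size_word_of_cat size_word_of_cons size_aw size_Xf; lia. Qed.

Lemma nth_XX_right x : T * N <= x ->
  nth (la 0) (W XX) x = nth (la 0) (W (Xf S T)) (x - T * N).
Proof. by move=> H; rewrite word_of_cat nth_cat size_Xf ltnNge H. Qed.

Lemma nth_XaX_right x : T * N + r <= x ->
  nth (la 0) (W XaX) x = nth (la 0) (W (Xf S T)) (x - T * N - r).
Proof.
move=> H; rewrite word_of_cat nth_cat size_Xf ltnNge (leq_trans (leq_addr r _) H) /=.
by rewrite nth_cat size_aw ltnNge (_ : r <= x - T * N) //; lia.
Qed.
End Sizes.

Lemma Xblock_room r s m S : 3 * m + 1 <= S ->
  2 * (m * size (vw r s)) + size (vw r s) <= size (word_of r s (Xblock S)).
Proof.
move=> S_ge; have : (3 * m + 1) * size (vw r s) <= S * size (vw r s).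
  by rewrite leq_mul2r S_ge orbT.
by rewrite size_Xblock; lia.
Qed.

Lemma Xf_head S T : 0 < T -> exists fs, Xf S T = Fv S :: fs.
Proof. by case: T => // t _; rewrite XfS; eexists. Qed.

Section Periodicity.
Variables r s m S T : nat.
Hypotheses (r_gt0 : 0 < r) (S_ge : 3 * m + 1 <= S) (T_ge2 : 2 <= T).
Local Notation V := (size (vw r s)).
Local Notation W := (word_of r s).
Local Notation N := (size (W (Xblock S))).
Local Notation XX := (Xf S T ++ Xf S T).
Local Notation XaX := (Xf S T ++ Fa :: Xf S T).
Local Notation A := (annot r s m).

Lemma annot_XX_XaX_head x : x + m * V < T * N -> A XX x = A XaX x.
Proof.
move=> Hx; case: (ltnP x (m * V)) => Hm.
- rewrite /annot size_XX size_XaX (_ : x < 2 * (T * N)); last by lia.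
  rewrite (_ : x < 2 * (T * N) + r); last by lia.
  rewrite !locate_prefix // !word_of_cat !nth_cat size_Xf.
  by rewrite (_ : x < T * N) //; lia.
- have [fs Hfs] := Xf_head S (ltnW T_ge2).
  have := @annot_mid r s m [::] (Xf S T) (Xf S T) [::] (Fa :: Xf S T) S fs x Hfs ltac:(lia).
  by apply; rewrite ?cat0s ?size_word_of_cat ?size_word_of_cons ?size_aw ?size_Xf //= add0n; lia.
Qed.

Lemma annot_XX_XaX_tail x : T * N + 2 * (m * V) <= x -> A XX x = A XaX (x + r).
Proof.
move=> Hx; have HN := Xblock_room r s S_ge.
case: (ltnP x (2 * (T * N))) => H1; last first.
  by rewrite !annot_out // ?size_XX ?size_XaX; lia.
case: (ltnP x (2 * (T * N) - m * V)) => H2.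
- have [fs Hfs] := Xf_head S (ltnW T_ge2).
  have E2 : XaX = (Xf S T ++ [:: Fa]) ++ Xf S T ++ [::] by rewrite cats0 -catA.
  have E1 : XX = Xf S T ++ Xf S T ++ [::] by rewrite cats0.
  have sL : size (W (Xf S T ++ [:: Fa])) = T * N + r.
    by rewrite size_word_of_cat size_word_of_cons size_aw size_Xf addn0.
  have := @annot_mid r s m (Xf S T) (Xf S T) [::] (Xf S T ++ [:: Fa]) [::] S fs (x - T * N)
    Hfs ltac:(lia).
  rewrite -E2 -E1 sL size_Xf (_ : T * N + (x - T * N) = x); last by lia.
  rewrite (_ : T * N + r + (x - T * N) = x + r); last by lia.
  apply; rewrite ?size_XX ?size_XaX ?size_Xf; try lia.
  + by move=> e /nbhds_aux_end; rewrite size_Xf; lia.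
  + by move=> e /nbhds_aux_end; rewrite sL; lia.
- rewrite /annot size_XX size_XaX H1 (_ : x + r < 2 * (T * N) + r); last by lia.
  rewrite !locate_suffix ?size_XX ?size_XaX; try lia.
  rewrite nth_XX_right ?nth_XaX_right; try lia.
  rewrite (_ : x + r - T * N - r = x - T * N); last by lia.
  by rewrite (_ : x + r - (2 * (T * N) + r - m * V) = x - (2 * (T * N) - m * V)); last by lia.
Qed.

Lemma annot_XX_period x : N <= x -> x + 4 * N <= 2 * (T * N) -> A XX x = A XX (x + N).
Proof.
move=> H1 H2; have HN := Xblock_room r s S_ge.
have N_gt0 : 0 < N by have := size_vw_gt0 s r_gt0; lia.
have Hd := divn_eq x N; have Ho := ltn_pmod x N_gt0.
move: Hd Ho; set i := x %/ N; set o := x %% N => Hd Ho.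
case: i Hd => [|i] Hd; first by rewrite mul0n add0n in Hd; lia.
have Hi : i.+1 + 4 <= 2 * T by rewrite -(leq_pmul2r N_gt0); lia.
have XXE : XX = Xf S (T + T) by rewrite Xf_add.
have E1 : XX = Xf S i ++ Xf S 3 ++ Xf S (T + T - i - 3).
  by rewrite XXE -!Xf_add; congr Xf; lia.
have E2 : XX = Xf S i.+1 ++ Xf S 3 ++ Xf S (T + T - i - 4).
  by rewrite XXE -!Xf_add; congr Xf; lia.
have := @annot_mid r s m (Xf S i) (Xf S 3) (Xf S (T + T - i - 3)) (Xf S i.+1)
  (Xf S (T + T - i - 4)) S (Fa :: Fv S :: Fb :: Fv S :: Xf S 2) (N + o) erefl ltac:(lia).
rewrite -E1 -E2 !size_Xf (_ : i * N + (N + o) = x); last by rewrite Hd mulSn; lia.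
rewrite (_ : i.+1 * N + (N + o) = x + N); last by rewrite Hd mulSn; lia.
apply; rewrite ?size_XX ?size_Xf; try (rewrite mulSn; lia); try lia.
- by move=> e /nbhds_aux_end; rewrite size_Xf; lia.
- by move=> e /nbhds_aux_end; rewrite size_Xf; lia.
Qed.

(* Around the inserted [a], XaX looks like the factor [v^S a v^S] of the first
   block of XX. *)
Lemma annot_XaX_insertion y : 2 * (m * V) <= y -> y + m * V < 2 * (S * V) + r ->
  A XaX (T * N - S * V + y) = A XX (N + y).
Proof.
move=> H1 H2; have HN := Xblock_room r s S_ge; have HNe := size_Xblock r s S.
have HT1 : T = T.-1.+1 by lia.
have XT : Xf S T = Xf S T.-1 ++ Xblock S by rewrite {1}HT1 -addn1 Xf_add.
have XT' : Xf S T = Xblock S ++ Xf S T.-1 by rewrite HT1.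
set L' := Xf S T.-1 ++ [:: Fv S; Fa; Fv S; Fb].
set M := [:: Fv S; Fa; Fv S].
set R' := [:: Fa; Fv S; Fb; Fv S] ++ Xf S T.-1.
have E2 : XaX = L' ++ M ++ R' by rewrite {1}XT XT' /L' /M /R' /Xblock -!catA.
have E1 : XX = Xblock S ++ M ++ ([:: Fb; Fv S] ++ Xf S (T + T - 2)).
  by rewrite -Xf_add {1}(_ : T + T = (T + T - 2).+2) //; lia.
have sL' : size (W L') = T * N - S * V.
  rewrite /L' size_word_of_cat size_Xf {2}HT1 mulSn HNe !size_word_of_cons /= !size_vpow.
  by rewrite size_aw size_bw; move: (T.-1) => t; lia.
have := @annot_mid r s m (Xblock S) M ([:: Fb; Fv S] ++ Xf S (T + T - 2)) L' R' S
  [:: Fa; Fv S] y erefl ltac:(lia).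
rewrite -E1 -E2 sL' => H; symmetry; apply: H; rewrite ?size_XX ?size_XaX ?sL'; try lia.
- by rewrite /M !size_word_of_cons /= !size_vpow size_aw; lia.
- by move=> e /nbhds_aux_end; lia.
- by move=> e /nbhds_aux_end; rewrite sL'; lia.
Qed.
End Periodicity.

Section Density.
Variables r s : nat.
Local Notation V := (size (vw r s)).
Local Notation W := (word_of r s).
Local Notation v_ t := (nth (la 0) (vw r s) t).

Definition v_dense (w : word) := forall x t, x + 3 * V <= size w -> t < V ->
  exists2 y, x <= y < x + 3 * V & nth (la 0) w y = v_ t.
Definition v_begins (w : word) :=
  V <= size w /\ forall t, t < V -> nth (la 0) w t = v_ t.
Definition v_ends (w : word) :=
  V <= size w /\ forall t, t < V -> nth (la 0) w (size w - V + t) = v_ t.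

Lemma nth_vpow n i t : i < n -> t < V -> nth (la 0) (vpow r s n) (i * V + t) = v_ t.
Proof.
elim: n i => // n IH [|i] Hi Ht; rewrite /vpow /= nth_cat; first by rewrite Ht.
rewrite ltnNge mulSn (leq_trans (leq_addr _ _) (leq_addr _ _)) /= -addnA addKn.
exact: IH.
Qed.

Lemma v_dense_vpow n : 0 < r -> v_dense (vpow r s n).
Proof.
move=> r_gt0 x t; rewrite size_vpow => Hx Ht.
have V_gt0 := size_vw_gt0 s r_gt0.
have Hd := divn_eq x V; have Ho := ltn_pmod x V_gt0.
move: Hd Ho; set i := x %/ V; set o := x %% V => Hd Ho.
have Hi : i.+3 <= n by rewrite -(leq_pmul2r V_gt0) !mulSn; lia.
by exists (i.+1 * V + t); [rewrite mulSn; lia | apply: nth_vpow; lia].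
Qed.

Lemma v_begins_vpow n : 0 < n -> v_begins (vpow r s n).
Proof.
move=> Hn; rewrite /v_begins size_vpow; split; first by rewrite leq_pmull.
by move=> t Ht; have := nth_vpow Hn Ht; rewrite mul0n add0n.
Qed.

Lemma v_ends_vpow n : 0 < n -> v_ends (vpow r s n).
Proof.
move=> Hn; rewrite /v_ends size_vpow; split; first by rewrite leq_pmull.
move=> t Ht; case: n Hn => // n _.
by rewrite mulSn addKn; apply: nth_vpow.
Qed.

Lemma v_begins_cat u w : v_begins u -> v_begins (u ++ w).
Proof.
case=> H1 H2; split; first by rewrite size_cat; lia.
by move=> t Ht; rewrite nth_cat (leq_trans Ht H1) H2.
Qed.

Lemma v_ends_cat u w : v_ends w -> v_ends (u ++ w).
Proof.
case=> H1 H2; split; first by rewrite size_cat; lia.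
move=> t Ht; rewrite nth_cat size_cat ltnNge (_ : size u <= _); last by lia.
by rewrite (_ : _ - size u = size w - V + t); [exact: H2 | lia].
Qed.

Lemma v_dense_cat u c w : v_dense u -> v_ends u -> v_dense w -> v_begins w ->
  size c <= V -> v_dense (u ++ c ++ w).
Proof.
move=> du [eu1 eu] dw [bw1 bw] hc x t Hx Ht.
rewrite (size_cat u) (size_cat c) in Hx.
have nth_w y : nth (la 0) (u ++ c ++ w) (size u + size c + y) = nth (la 0) w y.
  by rewrite -addnA nth_cat ltnNge leq_addr /= addKn nth_cat ltnNge leq_addr /= addKn.
case: (leqP (x + 3 * V) (size u)) => H1.
  have [y Hy Ey] := du x t H1 Ht.
  by exists y => //; rewrite nth_cat (_ : y < size u) //; lia.
case: (leqP (size u + size c) x) => H2.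
  have [y Hy Ey] := dw (x - (size u + size c)) t ltac:(lia) Ht.
  by exists (size u + size c + y); [lia | rewrite nth_w].
case: (leqP x (size u - V)) => H3.
  exists (size u - V + t); first by lia.
  by rewrite nth_cat (_ : size u - V + t < size u); [apply: eu | lia].
by exists (size u + size c + t); [lia | rewrite nth_w bw].
Qed.
End Density.

Section Cover.
Variables r s : nat.
Local Notation V := (size (vw r s)).
Local Notation W := (word_of r s).

Lemma size_vw : V = 3 * r + 3 * s.
Proof.
have size3 (f : nat -> word) l :
    (forall i, size (f i) = 3) -> size (flatten (map f l)) = 3 * size l.
  by move=> H; elim: l => //= a l IH; rewrite size_cat H IH; lia.
by rewrite /vw size_cat !size3 // !size_iota.
Qed.

Lemma mem_word_of fs z : z \in W fs -> z \in vw r s.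
Proof.
elim: fs => // f fs IH; rewrite mem_cat => /orP [|/IH //].
case: f => [||n] /=.
- move/mapP => [i Hi ->]; rewrite mem_cat; apply/orP; left; apply/flattenP.
  by exists [:: lc (2 * i - 1); la i; lc (2 * i)]; [apply/mapP; exists i | rewrite !inE eqxx orbT].
- move/mapP => [i Hi ->]; rewrite mem_cat; apply/orP; right; apply/flattenP.
  exists [:: lc (2 * r + 2 * i - 1); lb i; lc (2 * r + 2 * i)]; last by rewrite !inE eqxx orbT.
  by apply/mapP; exists i.
- by move/flattenP => [w']; rewrite mem_nseq => /andP [_ /eqP ->].
Qed.

Lemma jumps_cover_vw fs : v_dense r s (W fs) -> jumps_cover (3 * V + 1) (vw r s) (W fs).
Proof.
move=> dense x y Hxy Hy z; apply/idP/idP.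
  by rewrite /jumped => /mem_drop /mem_take; apply: mem_word_of.
move=> Hz; have Hi : index z (vw r s) < V by rewrite index_mem.
have [p Hp Ep] := dense x.+1 (index z (vw r s)) ltac:(lia) Hi.
rewrite nth_index // in Ep.
rewrite jumped_mkseq; [|lia|lia].
apply/mapP; exists (p - x.+1); first by rewrite mem_iota; lia.
by rewrite (_ : x.+1 + (p - x.+1) = p) //; lia.
Qed.

Lemma v_dense_Xf S n : 0 < r -> 0 < S ->
  [/\ v_dense r s (W (Xf S n.+1)), v_begins r s (W (Xf S n.+1)) & v_ends r s (W (Xf S n.+1))].
Proof.
move=> r_gt0 S_gt0; have Hv := size_vw.
have vS := v_dense_vpow (s := s) (n := S) r_gt0; have bS := v_begins_vpow r s S_gt0.
have eS := v_ends_vpow r s S_gt0.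
have [dB bB eB] : [/\ v_dense r s (W (Xblock S)), v_begins r s (W (Xblock S))
    & v_ends r s (W (Xblock S))].
  rewrite /word_of /= cats0; split; last by do 4 apply: v_ends_cat.
    apply: v_dense_cat; rewrite ?size_aw //; try lia; last exact: v_begins_cat.
    by apply: v_dense_cat; rewrite ?size_bw //; lia.
  exact: v_begins_cat.
elim: n => [|n [dX bX eX]]; first by split.
rewrite XfS word_of_cat; split; [|exact: v_begins_cat|exact: v_ends_cat].
by rewrite -[W (Xf S n.+1)]cat0s; apply: v_dense_cat.
Qed.

Lemma v_dense_Xf_cat S T c : 0 < r -> 0 < S -> 0 < T -> size c <= V ->
  v_dense r s (W (Xf S T) ++ c ++ W (Xf S T)).
Proof.
move=> r_gt0 S_gt0; case: T => // n _ Hc.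
by have [dX bX eX] := v_dense_Xf n r_gt0 S_gt0; apply: v_dense_cat.
Qed.
End Cover.

Lemma exists_modn_window N a x : 0 < N -> exists2 z, x <= z < x + N & z %% N = a %% N.
Proof.
move=> N_gt0; elim: x => [|x [z Hz Ez]]; first by exists (a %% N); rewrite ?modn_mod ?ltn_pmod.
case: (ltnP x z) => H; first by exists z => //; lia.
by exists (z + N); [lia | rewrite modnDr].
Qed.

Lemma eq_modn_offset N a b : a %% N = b %% N -> a <= b -> exists t, b = a + t * N.
Proof.
move=> E H; exists (b %/ N - a %/ N); rewrite mulnBl.
have H3 : a %/ N * N <= b %/ N * N by rewrite leq_mul2r leq_div2r ?orbT.
by have := divn_eq a N; have := divn_eq b N; lia.
Qed.

Section Recurrence.
Variables r s m S T : nat.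
Hypotheses (r_gt0 : 0 < r) (S_ge : 3 * m + 1 <= S) (T_ge2 : 2 <= T).
Local Notation V := (size (vw r s)).
Local Notation N := (size (word_of r s (Xblock S))).
Local Notation XX := (Xf S T ++ Xf S T).
Local Notation XaX := (Xf S T ++ Fa :: Xf S T).
Local Notation A := (annot r s m).

Lemma agree_around_XX_mod rho a b : a %% N = b %% N -> N + rho <= a -> N + rho <= b ->
  a + rho + 3 * N <= 2 * (T * N) -> b + rho + 3 * N <= 2 * (T * N) ->
  agree_around (A XX) (A XX) rho a b.
Proof.
have period t c : N + rho <= c -> c + t * N + rho + 3 * N <= 2 * (T * N) ->
    agree_around (A XX) (A XX) rho c (c + t * N).
  move=> H1 H2; apply: agree_around_period => x Hx1 Hx2.
  by apply: annot_XX_period => //; lia.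
move=> E Ha Hb Ha' Hb'; case: (leqP a b) => H.
  by have [t Et] := eq_modn_offset E H; rewrite Et; apply: period; lia.
have [t Et] := eq_modn_offset (esym E) (ltnW H).
by apply: agree_around_sym; rewrite Et; apply: period; lia.
Qed.

Variables (rho M : nat).
Hypotheses (rho_le : 3 * (m * V) + 3 * rho + 1 <= S * V) (M_ge : 5 * N <= M).

Lemma recurrent_XX_XaX p : M <= p -> p + M <= 2 * (T * N) ->
  forall x, M <= x -> x + 5 * N + M <= 2 * (T * N) + r ->
  exists2 q, x <= q < x + 5 * N & agree_around (A XX) (A XaX) rho p q.
Proof.
move=> H1 H2 x H3 H4.
have HN := size_Xblock r s S; have N_gt0 : 0 < N by have := size_vw_gt0 s r_gt0; lia.
case: (leqP (x + 2 * N) (T * N)) => Hc.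
- have [z Hz Ez] := exists_modn_window p x N_gt0.
  exists z; first by lia.
  apply: (agree_around_trans (B := A XX) (q := z)); first by lia.
    by apply: agree_around_XX_mod => //; lia.
  move=> y y' E _ Hy; rewrite (_ : y' = y); last by lia.
  by apply: annot_XX_XaX_head => //; lia.
- have [z Hz Ez] := exists_modn_window p (x + 3 * N) N_gt0.
  exists (z + r); first by lia.
  apply: (agree_around_trans (B := A XX) (q := z)); first by lia.
    by apply: agree_around_XX_mod => //; lia.
  move=> y y' E Hy _; rewrite (_ : y' = y + r); last by lia.
  by apply: annot_XX_XaX_tail => //; lia.
Qed.

Lemma recurrent_XaX_XX q : M <= q -> q + M <= 2 * (T * N) + r ->
  forall x, M <= x -> x + 5 * N + M <= 2 * (T * N) ->
  exists2 p, x <= p < x + 5 * N & agree_around (A XaX) (A XX) rho q p.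
Proof.
move=> H1 H2 x H3 H4.
have HN := size_Xblock r s S; have N_gt0 : 0 < N by have := size_vw_gt0 s r_gt0; lia.
have [z [Hz1 Hz2 Hagree]] : exists z, [/\ N + rho <= z, z + rho + 3 * N <= 2 * (T * N)
    & agree_around (A XaX) (A XX) rho q z].
  case: (ltnP (q + rho + m * V) (T * N)) => Hc1.
    exists q; split; try lia.
    move=> y y' E _ Hy; rewrite (_ : y' = y); last by lia.
    by symmetry; apply: annot_XX_XaX_head => //; lia.
  case: (leqP (T * N + 2 * (m * V) + rho + r) q) => Hc2.
    exists (q - r); split; try lia.
    move=> y y' E Hy _; rewrite (_ : y = y' + r); last by lia.
    by symmetry; apply: annot_XX_XaX_tail => //; lia.
  exists (q - (T * N - S * V) + N); split; try lia.
  move=> y y' E Hy1 Hy2.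
  rewrite (_ : y = T * N - S * V + (y - (T * N - S * V))); last by lia.
  rewrite (_ : y' = N + (y - (T * N - S * V))); last by lia.
  by apply: annot_XaX_insertion => //; lia.
have [z' Hz' Ez'] := exists_modn_window z x N_gt0.
exists z'; first by lia.
apply: (agree_around_trans (B := A XX) (q := z)) => //; first by lia.
by apply: agree_around_XX_mod => //; lia.
Qed.
End Recurrence.

Section XXvsXaX.
Variables r s m k S T : nat.
Local Notation V := (size (vw r s)).
Local Notation W := (word_of r s).
Local Notation N := (size (W (Xblock S))).
Local Notation d := (3 * V + 1).
Hypotheses (r_gt0 : 0 < r) (S_ge : 3 * m + 3 * (k * d) + 1 <= S) (T_ge : 7 * k + 20 <= T).

Lemma strategy_hyps_XX_XaX :
  strategy_hyps r s m d (d + 5 * N) (5 * N) (T * N - 2 * (m * V)) k (vw r s)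
    (Xf S T ++ Xf S T) (Xf S T ++ Fa :: Xf S T).
Proof.
have S_ge' : 3 * m + 1 <= S by lia.
have T_ge2 : 2 <= T by lia.
have T_gt0 : 0 < T by lia.
have S_gt0 : 0 < S by lia.
have V_gt0 := size_vw_gt0 s r_gt0.
have HN := size_Xblock r s S; have HmV := Xblock_room r s S_ge'.
have sXX := size_XX r s S T; have sXaX := size_XaX r s S T.
have Hrk : 3 * (m * V) + 3 * (k * d) + 1 <= S * V.
  have : (3 * m + 3 * (k * d) + 1) * V <= S * V by rewrite leq_mul2r S_ge orbT.
  have : k * d <= k * d * V by rewrite leq_pmulr // size_vw_gt0.
  lia.
have HdN : d <= N.
  have : 1 * V <= S * V by rewrite leq_mul2r S_gt0 orbT.
  lia.
have Hmk : margin (d + 5 * N) k <= k.+1 * (6 * N) by rewrite leq_mul2l; lia.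
have Hrk' : radius d k <= k * N by rewrite leq_mul2l HdN orbT.
have HTN : (7 * k + 20) * N <= T * N by rewrite leq_mul2r T_ge orbT.
split; rewrite ?sXX ?sXaX; try lia.
- by move=> x Hx; apply: annot_XX_XaX_head => //; lia.
- move=> x y E Hx; rewrite (_ : y = x + r); last by lia.
  by apply: annot_XX_XaX_tail => //; lia.
- apply: jumps_cover_vw; rewrite word_of_cat -{2}(cat0s (W (Xf S T))).
  exact: v_dense_Xf_cat.
- apply: jumps_cover_vw; rewrite word_of_cat.
  by apply: v_dense_Xf_cat; rewrite ?size_aw ?size_vw //; lia.
- move=> j Hj p H1 H2 x H3 H4.
  have Hrj : radius d j <= k * d by rewrite leq_mul2r Hj orbT.
  have Hmj : 5 * N <= margin (d + 5 * N) j by rewrite /margin mulSn; lia.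
  apply: (recurrent_XX_XaX r_gt0 S_ge' T_ge2 (M := margin (d + 5 * N) j));
    by rewrite ?sXX ?sXaX in H2 H4 *; lia.
- move=> j Hj q H1 H2 x H3 H4.
  have Hrj : radius d j <= k * d by rewrite leq_mul2r Hj orbT.
  have Hmj : 5 * N <= margin (d + 5 * N) j by rewrite /margin mulSn; lia.
  apply: (recurrent_XaX_XX r_gt0 S_ge' T_ge2 (M := margin (d + 5 * N) j));
    by rewrite ?sXX ?sXaX in H2 H4 *; lia.
Qed.
End XXvsXaX.

Theorem lemma14 (r s : nat) : 0 < r -> 0 < s ->
  forall m k : nat, 0 < k ->
  exists R : nat, 2 * m < R /\
    forall S T : nat, R <= S -> R <= T ->
      equivk r s m k (Xf S T ++ Xf S T) (Xf S T ++ Fa :: Xf S T).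
Proof.
move=> r_gt0 _ m k k_gt0.
exists (3 * m + 3 * (k.-1 * (3 * size (vw r s) + 1)) + 7 * k.-1 + 20).
split=> [|S T HS HT]; first by move: (k.-1 * _) => t; lia.
rewrite -(prednK k_gt0); apply: equivk_of_strategy_hyps.
apply: strategy_hyps_XX_XaX => //; move: HS HT; move: (k.-1 * _) => t; lia.
Qed.
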